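(* Let $F\colon\Omega\to\Omega$ be a piecewise translation in $\mathbb{R}^d$ with $m=d+1$ branches whose translation vectors $v_0,\dots,v_d$ have the property that any $d$ of them are linearly independent. Then for every $x\in\Omega$ and every $j\in\{0,\dots,d\}$ the set $\{n\ge0 : i(F^n(x))=j\}$ is infinite.
   Context: A region is a compact subset of $\mathbb{R}^d$ which equals the closure of its interior. A piecewise translation with $m$ branches: $\Omega\subset\mathbb{R}^d$ is a region, $\Omega=P_0\cup\dots\cup P_{m-1}$ with each $P_i$ a region, distinct $P_i$ intersecting only in boundaries, $\mathrm{Leb}(\partial P_i)=0$; vectors $v_i$ satisfy $x+v_i\in\Omega$ for $x\in P_i$; $i(x)$ is an index with $x\in P_{i(x)}$ (boundary ambiguity resolved by a fixed measurable rule), and $F(x)=x+v_{i(x)}$. *)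

From Stdlib Require Import Reals.
From Stdlib Require Fin.
Open Scope R_scope.

Definition pt (d : nat) := Fin.t d -> R.

Definition vadd {d : nat} (x y : pt d) : pt d := fun k => x k + y k.

(* y lies in the open sup-norm ball of radius r around x
   (sup-norm balls generate the usual topology of R^d). *)
Definition near {d : nat} (r : R) (x y : pt d) : Prop :=
  forall k : Fin.t d, Rabs (x k - y k) < r.

Definition interior {d : nat} (S : pt d -> Prop) (x : pt d) : Prop :=
  exists r, 0 < r /\ forall y, near r x y -> S y.

Definition closure {d : nat} (S : pt d -> Prop) (x : pt d) : Prop :=
  forall r, 0 < r -> exists y, S y /\ near r x y.

Definition boundary {d : nat} (S : pt d -> Prop) (x : pt d) : Prop :=
  closure S x /\ ~ interior S x.

Definition is_closed {d : nat} (S : pt d -> Prop) : Prop :=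
  forall x, closure S x -> S x.

Definition bounded {d : nat} (S : pt d -> Prop) : Prop :=
  exists M, forall x, S x -> forall k, Rabs (x k) <= M.

(* compact subset of R^d (Heine-Borel: closed and bounded) *)
Definition compact {d : nat} (S : pt d -> Prop) : Prop :=
  is_closed S /\ bounded S.

Definition region {d : nat} (S : pt d -> Prop) : Prop :=
  compact S /\ forall x, S x <-> closure (interior S) x.

Fixpoint prod_fin (n : nat) : (Fin.t n -> R) -> R :=
  match n return (Fin.t n -> R) -> R with
  | O => fun _ => 1
  | S n' => fun f => f Fin.F1 * prod_fin n' (fun i => f (Fin.FS i))
  end.

Definition box_vol {d : nat} (a b : pt d) : R := prod_fin d (fun k => b k - a k).

Definition in_box {d : nat} (a b y : pt d) : Prop :=
  forall k, a k <= y k <= b k.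

Definition leb_null {d : nat} (S : pt d -> Prop) : Prop :=
  forall eps, 0 < eps ->
    exists a b : nat -> pt d,
      (forall n k, a n k <= b n k) /\
      (forall x, S x -> exists n, in_box (a n) (b n) x) /\
      (forall N, sum_f_R0 (fun n => box_vol (a n) (b n)) N <= eps).

(* Piecewise translation Omega = P_0 u ... u P_(m-1) with vectors v_i and
   index rule idx (branches indexed by naturals 0..m-1). *)
Definition piecewise_translation {d : nat} (m : nat) (Omega : pt d -> Prop)
    (P : nat -> pt d -> Prop) (v : nat -> pt d) (idx : pt d -> nat) : Prop :=
  region Omega /\
  (forall i, (i < m)%nat -> region (P i)) /\
  (forall x, Omega x <-> exists i, (i < m)%nat /\ P i x) /\
  (forall i j x, (i < m)%nat -> (j < m)%nat -> i <> j -> P i x -> P j x ->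
      boundary (P i) x /\ boundary (P j) x) /\
  (forall i, (i < m)%nat -> leb_null (boundary (P i))) /\
  (forall i x, (i < m)%nat -> P i x -> Omega (vadd x (v i))) /\
  (forall x, Omega x -> (idx x < m)%nat /\ P (idx x) x).

Definition pt_map {d : nat} (v : nat -> pt d) (idx : pt d -> nat) (x : pt d) : pt d :=
  vadd x (v (idx x)).

Definition lin_indep_except {d : nat} (v : nat -> pt d) (j : nat) : Prop :=
  forall c : nat -> R,
    (forall k : Fin.t d,
        sum_f_R0 (fun i => if Nat.eqb i j then 0 else c i * v i k) d = 0) ->
    forall i, (i <= d)%nat -> i <> j -> c i = 0.

(* Suppose the orbit of x eventually avoids branch j.  From then on every
   step adds one of the d vectors v_i, i <> j, so y_(N+n) - y_N is a
   combination of these vectors with nonnegative coefficients summing to n.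
   These d vectors are linearly independent, hence (by Gaussian elimination)
   coefficients of a combination are bounded by a constant times its size.
   Since Omega is bounded, the displacements are bounded, and so are the
   coefficient sums n: a contradiction. *)
From Stdlib Require Import Reals Lra Lia Arith Classical.
From Stdlib Require Fin.
Open Scope R_scope.

(* [sum_lt n f] has [n] terms [f 0 .. f (n-1)], unlike [sum_f_R0 f n]. *)
Fixpoint sum_lt (n : nat) (f : nat -> R) : R :=
  match n with O => 0 | S n' => f O + sum_lt n' (fun i => f (S i)) end.

Lemma sum_lt_ext n : forall f g, (forall i, (i < n)%nat -> f i = g i) ->
  sum_lt n f = sum_lt n g.
Proof.
  induction n; intros f g H; simpl; auto.
  rewrite (H 0%nat) by lia. f_equal. apply IHn. intros; apply H; lia.
Qed.

Lemma sum_lt_add n : forall f g, sum_lt n (fun i => f i + g i) = sum_lt n f + sum_lt n g.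
Proof. induction n; intros; simpl; [lra|]. rewrite IHn. lra. Qed.

Lemma sum_lt_scal n : forall r f, sum_lt n (fun i => r * f i) = r * sum_lt n f.
Proof. induction n; intros; simpl; [lra|]. rewrite IHn. lra. Qed.

Lemma sum_lt_0 n : sum_lt n (fun _ => 0) = 0.
Proof. induction n; simpl; [lra|]. rewrite IHn. lra. Qed.

Lemma sum_lt_abs_le n : forall f b, (forall i, (i < n)%nat -> Rabs (f i) <= b) ->
  Rabs (sum_lt n f) <= INR n * b.
Proof.
  induction n; intros f b H; cbn [sum_lt].
  - rewrite Rabs_R0. simpl INR. lra.
  - rewrite S_INR. eapply Rle_trans; [apply Rabs_triang|].
    assert (H0 := H 0%nat ltac:(lia)).
    assert (H1 := IHn (fun i => f (S i)) b ltac:(intros; apply H; lia)).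
    lra.
Qed.

Lemma sum_lt_last n : forall f, sum_lt (S n) f = sum_lt n f + f n.
Proof.
  induction n; intros; simpl in *; [lra|].
  rewrite (IHn (fun i => f (S i))). simpl. lra.
Qed.

Lemma sum_f_R0_sum_lt g n : sum_f_R0 g n = sum_lt (S n) g.
Proof.
  induction n; [simpl; lra|].
  rewrite sum_lt_last. simpl sum_f_R0. rewrite IHn. reflexivity.
Qed.

Lemma sum_lt_add_indicator n : forall t f g, (t < n)%nat ->
  sum_lt n (fun i => f i + (if Nat.eqb i t then g i else 0)) = sum_lt n f + g t.
Proof.
  induction n; intros t f g Ht; [lia|]. simpl.
  destruct t as [|t'].
  - rewrite (sum_lt_ext n _ (fun i => f (S i))) by (intros; simpl; lra). simpl. lra.
  - rewrite (IHn t' (fun i => f (S i)) (fun i => g (S i))) by lia. lra.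
Qed.

Lemma Rabs_sub_le (x y : R) : Rabs (x - y) <= Rabs x + Rabs y.
Proof. unfold Rminus. rewrite <- (Rabs_Ropp y). apply Rabs_triang. Qed.

(* [skip j] enumerates [{0, ..., d} \ {j}] increasingly; [unskip j] inverts it. *)

Definition skip (j i : nat) : nat := if Nat.ltb i j then i else S i.
Definition unskip (j i : nat) : nat := if Nat.ltb i j then i else pred i.

Lemma skip_neq j i : skip j i <> j.
Proof. unfold skip. destruct (Nat.ltb_spec i j); lia. Qed.

Lemma skip_le d j i : (i < d)%nat -> (j <= d)%nat -> (skip j i <= d)%nat.
Proof. unfold skip. destruct (Nat.ltb_spec i j); lia. Qed.

Lemma unskip_skip j i : unskip j (skip j i) = i.
Proof.
  unfold skip, unskip. destruct (Nat.ltb_spec i j) as [H|H].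
  - now rewrite (proj2 (Nat.ltb_lt i j) H).
  - now rewrite (proj2 (Nat.ltb_ge (S i) j) ltac:(lia)).
Qed.

Lemma skip_unskip j i : i <> j -> skip j (unskip j i) = i.
Proof.
  intro Hij. unfold skip, unskip. destruct (Nat.ltb_spec i j) as [H|H].
  - now rewrite (proj2 (Nat.ltb_lt i j) H).
  - rewrite (proj2 (Nat.ltb_ge (pred i) j) ltac:(lia)). lia.
Qed.

Lemma unskip_lt d j i : (j <= d)%nat -> (i <= d)%nat -> i <> j -> (unskip j i < d)%nat.
Proof. unfold unskip. destruct (Nat.ltb_spec i j); lia. Qed.

Lemma sum_lt_skip d : forall j h, (j <= d)%nat ->
  sum_lt (S d) (fun i => if Nat.eqb i j then 0 else h i) = sum_lt d (fun i => h (skip j i)).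
Proof.
  induction d; intros j h Hj.
  - assert (j = 0%nat) by lia. subst. simpl. lra.
  - destruct j as [|j'].
    + change (0 + sum_lt (S d) (fun i => if Nat.eqb (S i) 0 then 0 else h (S i))
              = sum_lt (S d) (fun i => h (skip 0 i))).
      rewrite Rplus_0_l. apply sum_lt_ext. intros i _. reflexivity.
    + change (h 0%nat + sum_lt (S d) (fun i => if Nat.eqb i j' then 0 else h (S i))
              = h 0%nat + sum_lt d (fun i => h (skip (S j') (S i)))).
      rewrite (IHd j' (fun i => h (S i))) by lia.
      f_equal. apply sum_lt_ext. intros i _. unfold skip.
      change (Nat.ltb (S i) (S j')) with (Nat.ltb i j').
      destruct (Nat.ltb i j'); reflexivity.
Qed.

Section LinearCombinations.

Context {Row : Type}.

Definition lincomb (n : nat) (c : nat -> R) (a : nat -> Row -> R) (k : Row) : R :=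
  sum_lt n (fun i => c i * a i k).

Definition dependent (n : nat) (a : nat -> Row -> R) : Prop :=
  exists c : nat -> R, (exists i, (i < n)%nat /\ c i <> 0) /\
    forall k, lincomb n c a k = 0.

Definition coercive (n : nat) (a : nat -> Row -> R) : Prop :=
  exists K, 0 <= K /\ forall (c : nat -> R) B, 0 <= B ->
    (forall k, Rabs (lincomb n c a k) <= B) ->
    forall i, (i < n)%nat -> Rabs (c i) <= K * B.

Lemma coercive_sum_le n a : coercive n a ->
  forall B, 0 <= B -> exists C, forall c,
    (forall k, Rabs (lincomb n c a k) <= B) -> sum_lt n c <= C.
Proof.
  intros [K [HK Hcoer]] B HB. exists (INR n * (K * B)). intros c Hc.
  eapply Rle_trans; [apply RRle_abs|].
  apply sum_lt_abs_le. intros i Hi. exact (Hcoer c B HB Hc i Hi).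
Qed.

(* Gaussian elimination of the first vector [a 0], with pivot column [k0]. *)
Definition eliminate (a : nat -> Row -> R) (k0 : Row) (i : nat) (k : Row) : R :=
  a (S i) k - a 0%nat k * a (S i) k0 / a 0%nat k0.

Section Elimination.

Variables (n : nat) (a : nat -> Row -> R) (k0 : Row).
Hypothesis pivot_neq0 : a 0%nat k0 <> 0.

Lemma lincomb_eliminate c k :
  lincomb n (fun i => c (S i)) (eliminate a k0) k =
  lincomb (S n) c a k - a 0%nat k / a 0%nat k0 * lincomb (S n) c a k0.
Proof.
  unfold lincomb, eliminate. cbn [sum_lt].
  rewrite (sum_lt_ext n _ (fun i => c (S i) * a (S i) k
             + (- (a 0%nat k / a 0%nat k0)) * (c (S i) * a (S i) k0)))
    by (intros; field; exact pivot_neq0).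
  rewrite sum_lt_add, sum_lt_scal. field. exact pivot_neq0.
Qed.

Lemma eliminate_bounded A : (forall i k, (i < S n)%nat -> Rabs (a i k) <= A) ->
  forall i k, (i < n)%nat -> Rabs (eliminate a k0 i k) <= A + A * A / Rabs (a 0%nat k0).
Proof.
  intros HA i k Hi. unfold eliminate.
  assert (Hp : 0 < Rabs (a 0%nat k0)) by (apply Rabs_pos_lt; exact pivot_neq0).
  assert (h1 := HA (S i) k ltac:(lia)).
  assert (h2 := HA 0%nat k ltac:(lia)).
  assert (h3 := HA (S i) k0 ltac:(lia)).
  eapply Rle_trans; [apply Rabs_sub_le|].
  unfold Rdiv. rewrite !Rabs_mult, Rabs_inv.
  assert (Rabs (a 0%nat k) * Rabs (a (S i) k0) <= A * A)
    by (apply Rmult_le_compat; auto using Rabs_pos).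
  assert (0 < / Rabs (a 0%nat k0)) by (apply Rinv_0_lt_compat; exact Hp).
  nra.
Qed.

Lemma dependent_eliminate : dependent n (eliminate a k0) -> dependent (S n) a.
Proof.
  intros [c' [[i0 [Hi0 Hc0]] Hker]].
  (* the first coefficient is chosen so that the pivot column vanishes *)
  set (c := fun i => match i with
                     | O => - lincomb n c' (fun i => a (S i)) k0 / a 0%nat k0
                     | S i => c' i end).
  assert (Hpivot : lincomb (S n) c a k0 = 0).
  { unfold lincomb at 1. cbn [sum_lt]. subst c. cbv beta iota.
    fold (lincomb n c' (fun i => a (S i)) k0). field. exact pivot_neq0. }
  exists c. split; [exists (S i0); split; [lia | exact Hc0]|].
  intro k. pose proof (lincomb_eliminate c k) as E.
  rewrite Hpivot, Rmult_0_r, Rminus_0_r in E. rewrite <- E. apply Hker.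
Qed.

Lemma coercive_eliminate A : (forall i k, (i < S n)%nat -> Rabs (a i k) <= A) ->
  coercive n (eliminate a k0) -> coercive (S n) a.
Proof.
  intros HA [K' [HK' HB']].
  set (q := / Rabs (a 0%nat k0)).
  assert (Hq : 0 < q) by (apply Rinv_0_lt_compat, Rabs_pos_lt, pivot_neq0).
  assert (HA0 : 0 <= A) by (eapply Rle_trans; [apply Rabs_pos | apply (HA 0%nat k0); lia]).
  assert (HAq : 0 <= 1 + A * q) by nra.
  set (Kc := K' * (1 + A * q)).
  assert (HKc : 0 <= Kc) by (apply Rmult_le_pos; assumption).
  exists (Kc + (1 + INR n * A * Kc) * q).
  assert (HnAK : 0 <= INR n * A * Kc)
    by (apply Rmult_le_pos; [apply Rmult_le_pos; [apply pos_INR|]|]; assumption).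
  split; [nra|]. intros c B HB Hc.
  assert (Htail : forall i, (i < n)%nat -> Rabs (c (S i)) <= Kc * B).
  { intros i Hi. unfold Kc. rewrite Rmult_assoc.
    apply (HB' (fun i => c (S i))); [apply Rmult_le_pos; assumption | | exact Hi].
    intro k. rewrite lincomb_eliminate.
    eapply Rle_trans; [apply Rabs_sub_le|].
    unfold Rdiv. rewrite !Rabs_mult, Rabs_inv. fold q.
    assert (h1 := Hc k). assert (h2 := Hc k0). assert (h3 := HA 0%nat k ltac:(lia)).
    assert (Rabs (a 0%nat k) * q * Rabs (lincomb (S n) c a k0) <= A * q * B).
    { apply Rmult_le_compat; [| apply Rabs_pos | | exact h2].
      - pose proof (Rabs_pos (a 0%nat k)); nra.
      - apply Rmult_le_compat_r; lra. }
    lra. }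
  (* c 0 * a 0 k0 is the pivot entry of the combination minus the tail *)
  assert (Hhead : Rabs (c 0%nat) <= (1 + INR n * A * Kc) * q * B).
  { set (U := lincomb n (fun i => c (S i)) (fun i => a (S i)) k0).
    assert (HU : Rabs U <= INR n * (Kc * B * A)).
    { apply sum_lt_abs_le. intros i Hi. rewrite Rabs_mult.
      apply Rmult_le_compat; auto using Rabs_pos. apply HA; lia. }
    assert (E : c 0%nat = (lincomb (S n) c a k0 - U) * / a 0%nat k0)
      by (unfold U, lincomb; cbn [sum_lt]; field; exact pivot_neq0).
    rewrite E, Rabs_mult, Rabs_inv. fold q.
    assert (Rabs (lincomb (S n) c a k0 - U) <= B + INR n * (Kc * B * A))
      by (eapply Rle_trans; [apply Rabs_sub_le | assert (h := Hc k0); lra]).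
    nra. }
  intros [|i] Hi; [nra|].
  assert (h := Htail i ltac:(lia)).
  assert (0 <= (1 + INR n * A * Kc) * q * B) by (apply Rmult_le_pos; nra).
  nra.
Qed.

End Elimination.

Lemma dependent_or_coercive n : forall (a : nat -> Row -> R) A,
  (forall i k, (i < n)%nat -> Rabs (a i k) <= A) -> dependent n a \/ coercive n a.
Proof.
  induction n as [|n IH]; intros a A HA.
  - right. exists 0. split; [lra | intros; lia].
  - destruct (classic (exists k0, a 0%nat k0 <> 0)) as [[k0 Hk0] | Hzero].
    + destruct (IH (eliminate a k0) _ (eliminate_bounded n a k0 Hk0 A HA))
        as [Hdep | Hcoer].
      * left. exact (dependent_eliminate n a k0 Hk0 Hdep).
      * right. exact (coercive_eliminate n a k0 Hk0 A HA Hcoer).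
    + left. exists (fun i => match i with O => 1 | _ => 0 end).
      split; [exists 0%nat; split; [lia | lra]|].
      intro k. unfold lincomb. cbn [sum_lt].
      assert (a 0%nat k = 0) by (apply NNPP; intro; apply Hzero; eauto).
      rewrite (sum_lt_ext n _ (fun _ => 0)) by (intros; lra).
      rewrite sum_lt_0. lra.
Qed.

End LinearCombinations.

Lemma fin_bounded d (g : Fin.t d -> R) : exists M, forall k, Rabs (g k) <= M.
Proof.
  induction d as [|d IH].
  - exists 0. intro k. inversion k.
  - destruct (IH (fun k => g (Fin.FS k))) as [M HM].
    exists (Rmax (Rabs (g Fin.F1)) M). intro k.
    apply (Fin.caseS' k (fun k => Rabs (g k) <= _)).
    + apply Rmax_l.
    + intro q. eapply Rle_trans; [apply HM | apply Rmax_r].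
Qed.

Lemma family_bounded {d} (w : nat -> pt d) n :
  exists A, forall i k, (i < n)%nat -> Rabs (w i k) <= A.
Proof.
  induction n as [|n [A HA]].
  - exists 0. intros; lia.
  - destruct (fin_bounded d (w n)) as [M HM].
    exists (Rmax A M). intros i k Hi.
    destruct (Nat.eq_dec i n) as [->|].
    + eapply Rle_trans; [apply HM | apply Rmax_r].
    + eapply Rle_trans; [apply HA; lia | apply Rmax_l].
Qed.

Lemma bounded_diameter {d} (D : pt d -> Prop) : bounded D ->
  exists B, 0 <= B /\ forall x y, D x -> D y -> forall k, Rabs (x k - y k) <= B.
Proof.
  intros [M HM]. exists (2 * Rabs M). split; [pose proof (Rabs_pos M); lra|].
  intros x y Hx Hy k.
  assert (h1 := HM x Hx k). assert (h2 := HM y Hy k). assert (M <= Rabs M) by apply RRle_abs.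
  eapply Rle_trans; [apply Rabs_sub_le | lra].
Qed.

Lemma iter_pt_map_in {d} m Omega P (v : nat -> pt d) idx :
  piecewise_translation m Omega P v idx ->
  forall x, Omega x -> forall n, Omega (Nat.iter n (pt_map v idx) x).
Proof.
  intros [_ [_ [_ [_ [_ [Hv Hidx]]]]]] x Hx n.
  induction n as [|n IH]; [exact Hx|].
  rewrite Nat.iter_succ. destruct (Hidx _ IH). apply Hv; assumption.
Qed.

Lemma displacement_avoiding {d} (v : nat -> pt d) idx j y n : (j <= d)%nat ->
  (forall m, (m < n)%nat ->
     (idx (Nat.iter m (pt_map v idx) y) <= d)%nat /\ idx (Nat.iter m (pt_map v idx) y) <> j) ->
  exists c : nat -> R,
    (forall k, Nat.iter n (pt_map v idx) y k - y k = lincomb d c (fun i => v (skip j i)) k)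
    /\ sum_lt d c = INR n.
Proof.
  intros Hj. induction n as [|n IH]; intros Havoid.
  - exists (fun _ => 0). unfold lincomb.
    split; [intro k | apply sum_lt_0].
    rewrite (sum_lt_ext d _ (fun _ => 0)) by (intros; lra).
    rewrite sum_lt_0. simpl. lra.
  - destruct (IH (fun m Hm => Havoid m ltac:(lia))) as [c [Hdisp Hsum]].
    destruct (Havoid n ltac:(lia)) as [Hle Hneq].
    set (z := Nat.iter n (pt_map v idx) y) in *.
    set (t := unskip j (idx z)).
    assert (Ht : (t < d)%nat) by exact (unskip_lt d j (idx z) Hj Hle Hneq).
    assert (Hskip : skip j t = idx z) by exact (skip_unskip j (idx z) Hneq).
    exists (fun i => c i + (if Nat.eqb i t then 1 else 0)). split.
    + intro k. unfold lincomb.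
      rewrite (sum_lt_ext d _ (fun i => c i * v (skip j i) k
                 + (if Nat.eqb i t then v (skip j i) k else 0)))
        by (intros i _; destruct (Nat.eqb i t); lra).
      rewrite sum_lt_add_indicator by exact Ht.
      fold (lincomb d c (fun i => v (skip j i)) k). rewrite <- Hdisp, Hskip.
      rewrite Nat.iter_succ. fold z. unfold pt_map, vadd. lra.
    + rewrite sum_lt_add_indicator by exact Ht. rewrite Hsum, S_INR. lra.
Qed.

Lemma lin_indep_except_not_dependent {d} (v : nat -> pt d) j : (j <= d)%nat ->
  lin_indep_except v j -> ~ dependent d (fun i => v (skip j i)).
Proof.
  intros Hj Hindep [c [[i0 [Hi0 Hc0]] Hker]].
  apply Hc0. rewrite <- (unskip_skip j i0).
  apply (Hindep (fun i => c (unskip j i))).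
  - intro k. rewrite sum_f_R0_sum_lt, (sum_lt_skip d j (fun i => c (unskip j i) * v i k) Hj).
    rewrite <- (Hker k). apply sum_lt_ext. intros i _. now rewrite unskip_skip.
  - exact (skip_le d j i0 Hi0 Hj).
  - apply skip_neq.
Qed.

Theorem proposition2p4 (d : nat) (Omega : pt d -> Prop) (P : nat -> pt d -> Prop)
  (v : nat -> pt d) (idx : pt d -> nat) :
  piecewise_translation (S d) Omega P v idx ->
  (forall j, (j <= d)%nat -> lin_indep_except v j) ->
  forall x, Omega x ->
  forall j, (j <= d)%nat ->
  forall N : nat, exists n, (N <= n)%nat /\
    idx (Nat.iter n (pt_map v idx) x) = j.
Proof.
  intros Hpt Hindep x Hx j Hj N.
  apply NNPP. intro Hnever.
  pose proof Hpt as [[[_ Hbdd] _] [_ [_ [_ [_ [_ Hidx]]]]]].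
  destruct (bounded_diameter Omega Hbdd) as [B [HB Hdiam]].
  set (y := Nat.iter N (pt_map v idx) x).
  assert (Hin : forall n, Omega (Nat.iter n (pt_map v idx) x))
    by exact (iter_pt_map_in _ _ _ _ _ Hpt x Hx).
  assert (Havoid : forall n m, (m < n)%nat ->
            (idx (Nat.iter m (pt_map v idx) y) <= d)%nat /\ idx (Nat.iter m (pt_map v idx) y) <> j).
  { intros n m _. unfold y. rewrite <- Nat.iter_add. split.
    - destruct (Hidx _ (Hin (m + N)%nat)). lia.
    - intro E. apply Hnever. exists (m + N)%nat. split; [lia | exact E]. }
  destruct (family_bounded (fun i => v (skip j i)) d) as [A HA].
  destruct (dependent_or_coercive d _ A HA) as [Hdep | Hcoer].
  - exact (lin_indep_except_not_dependent v j Hj (Hindep j Hj) Hdep).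
  - destruct (coercive_sum_le d _ Hcoer B HB) as [C HC].
    destruct (INR_unbounded C) as [n Hn].
    destruct (displacement_avoiding v idx j y n Hj (Havoid n)) as [c [Hdisp Hsum]].
    assert (sum_lt d c <= C).
    { apply HC. intro k. rewrite <- Hdisp. unfold y. rewrite <- Nat.iter_add.
      apply Hdiam; apply Hin. }
    lra.
Qed.
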